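(* For every positive integer $n$, \[ \mathrm{B}_n=\frac{1}{e}\sum_{k=1}^{n}(-1)^{n-k}\,S(n,k)\,k!\;{}_1F_1(k+1;2;1). \]
   Context: $\mathrm{B}_n$ denotes the $n$-th Bell number, defined by the generating function $e^{e^x-1}=\sum_{k=0}^\infty \mathrm{B}_k\frac{x^k}{k!}$ (equivalently, $\mathrm{B}_n$ is the number of partitions of an $n$-element set into nonempty blocks). $S(n,k)$ denotes the Stirling number of the second kind, $S(n,k)=\frac{1}{k!}\sum_{i=0}^{k}(-1)^i\binom{k}{i}(k-i)^n$. ${}_1F_1(a;b;z)=\sum_{m=0}^\infty \frac{(a)_m}{(b)_m}\frac{z^m}{m!}$ is Kummer's confluent hypergeometric function, where $(a)_0=1$ and $(a)_m=a(a+1)\cdots(a+m-1)$ for $m\ge1$. *)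

From Stdlib Require Import Reals Arith.
Open Scope R_scope.

Definition stirling2 (n k : nat) : R :=
  / INR (fact k) *
  sum_f_R0 (fun i => (-1) ^ i * C k i * INR (k - i) ^ n) k.

Fixpoint pochhammer (a : R) (m : nat) : R :=
  match m with
  | O => 1
  | S m' => pochhammer a m' * (a + INR m')
  end.

Definition hyp1F1_term (a b z : R) (m : nat) : R :=
  pochhammer a m / pochhammer b m * z ^ m / INR (fact m).

Close Scope R_scope.

From mathcomp Require Import ssreflect ssrbool ssrfun eqtype ssrnat seq
  choice fintype finfun bigop finset.

Definition Bell (n : nat) : nat :=
  #|[set P : {set {set 'I_n}} | partition P [set: 'I_n]]|.

(* Three classical facts are combined.
   1. The binomial recurrence B_{n+1} = sum_k C(n,k) B_k, proved by counting
      set partitions according to the block containing a fixed point.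
   2. Dobinski's formula B_n e = sum_j j^n / j!, by strong induction from 1.
   3. The rising-factorial expansion x^n = sum_k (-1)^(n-k) S(n,k) (x)_k,
      obtained from x^n = sum_k S(n,k) x(x-1)...(x-k+1), which in turn follows
      from the triangular recurrence of the Stirling numbers.
   The m-th term of 1F1(k+1;2;1) is (k+1)_m / ((m+1)! m!), so k! times it equals
   (m+1)_k / (m+1)!.  Hence 3 at x = m+1 writes the Dobinski term
   (m+1)^n/(m+1)! as a finite combination of Kummer terms; summing over m and
   using 2 gives the theorem.  The Kummer series converge by comparison with
   the exponential series at k+1. *)

From Stdlib Require Import Reals Arith.
From mathcomp Require ssreflect ssrbool ssrfun eqtype ssrnat seq choice
  fintype finfun bigop finset binomial.
Open Scope R_scope.

Module BellRecurrence.
Import ssreflect ssrbool ssrfun eqtype ssrnat seq choice fintype finfun bigop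
  finset binomial.
Local Close Scope R_scope.
Local Set Implicit Arguments.
Local Unset Strict Implicit.

Definition npartitions (T : finType) (A : {set T}) : nat :=
  #|[set P : {set {set T}} | partition P A]|.

Lemma npartitions_set0 (T : finType) : npartitions (set0 : {set T}) = 1.
Proof.
rewrite /npartitions (_ : [set P | partition P set0] = [set set0]) ?cards1 //.
by apply/setP => P; rewrite !inE partition_set0.
Qed.

(* Partitions of A whose block through x is B correspond, by removing B,
   to partitions of A :\: B. *)
Lemma npartitions_pblock (T : finType) (A B : {set T}) (x : T) :
  x \in B -> B \subset A ->
  #|[set P | partition P A & pblock P x == B]| = npartitions (A :\: B).
Proof.
move=> xB sBA.
have B_neq0 : B != set0 by apply/set0Pn; exists x.
have disjB : [disjoint B & A :\: B] by rewrite disjoints_subset setCD subsetUr.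
have BUA : B :|: (A :\: B) = A by rewrite -{1}(setIidPr sBA) setID.
have B_notin Q : partition Q (A :\: B) -> B \notin Q.
  move=> pQ; apply/negP => /(partitionS pQ)/subsetP/(_ x xB).
  by rewrite inE xB.
rewrite /npartitions -[in RHS](@card_in_imset _ _ (fun Q => B |: Q)); last first.
  move=> Q1 Q2; rewrite !inE => p1 p2 /= eQ.
  by rewrite -(setU1K (B_notin _ p1)) -(setU1K (B_notin _ p2)) eQ.
apply: eq_card => P; rewrite !inE; apply/andP/imsetP => [[pP /eqP <-]|[Q]].
  have xP : x \in cover P by rewrite (cover_partition pP) (subsetP sBA).
  exists (P :\ pblock P x); last by rewrite setD1K ?pblock_mem.
  by rewrite inE partitionD1 ?pblock_mem.
rewrite inE => pQ ->; have := partitionU1 pQ B_neq0 disjB; rewrite BUA => pBQ.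
split=> //; apply/eqP/def_pblock; rewrite ?setU11 //.
exact: partition_trivIset pBQ.
Qed.

Lemma npartitions_by_block (T : finType) (A : {set T}) (x : T) : x \in A ->
  npartitions A =
  \sum_(B : {set T} | (x \in B) && (B \subset A)) npartitions (A :\: B).
Proof.
move=> xA; rewrite /npartitions -sum1dep_card.
rewrite (partition_big (fun P => pblock P x)
           (fun B : {set T} => (x \in B) && (B \subset A))); last first.
  move=> P pP; have xP : x \in cover P by rewrite (cover_partition pP).
  by rewrite mem_pblock xP (partitionS pP) ?pblock_mem.
apply: eq_bigr => B /andP[xB sBA].
by rewrite sum1dep_card; apply: npartitions_pblock.
Qed.

(* The basic recursion: replacing the block B through x by its complement
   A :\: B, the partitions of A are counted by the partitions of all
   subsets of A :\ x. *)
Lemma npartitions_rec (T : finType) (A : {set T}) (x : T) : x \in A ->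
  npartitions A = \sum_(R : {set T} | R \subset A :\ x) npartitions R.
Proof.
move=> xA; rewrite (npartitions_by_block xA).
have compK (B : {set T}) : B \subset A -> A :\: (A :\: B) = B.
  by move=> sBA; rewrite setDDr setDv set0U; apply/setIidPr.
rewrite (reindex_onto (fun R => A :\: R) (fun B => A :\: B)); last first.
  by move=> B /andP[_]; apply: compK.
apply: eq_big => [R|R /andP[_ /eqP ->] //].
rewrite subsetD1 inE xA andbT subsetDl setDDr setDv set0U andbT.
by rewrite andbC (sameP eqP setIidPr).
Qed.

Lemma sum_subsets_by_card (T : finType) (D : {set T}) (f : nat -> nat) :
  \sum_(R : {set T} | R \subset D) f #|R| =
  \sum_(k < #|D|.+1) 'C(#|D|, k) * f k.
Proof.
rewrite (partition_big (fun R : {set T} => inord #|R| : 'I_#|D|.+1) xpredT) //.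
apply: eq_bigr => k _; rewrite -cards_draws -sum1dep_card big_distrl /=.
apply: eq_big => [R|R /andP[sRD /eqP <-]]; last first.
  by rewrite inordK ?mul1n // ltnS subset_leq_card.
apply/andP/andP => -[sRD /eqP eRk]; split=> //; apply/eqP.
  by rewrite -eRk inordK // ltnS subset_leq_card.
by apply: val_inj; rewrite /= inordK ?eRk // ltnS subset_leq_card.
Qed.

Lemma npartitions_Bell_sum (T : finType) (A : {set T}) (x : T) : x \in A ->
  (forall R : {set T}, R \subset A :\ x -> npartitions R = Bell #|R|) ->
  npartitions A = \sum_(k < #|A|) 'C(#|A|.-1, k) * Bell k.
Proof.
move=> xA IH; rewrite (npartitions_rec xA).
rewrite (eq_bigr (fun R : {set T} => Bell #|R|)) ?sum_subsets_by_card; last first.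
  by move=> R /IH.
by rewrite (cardsD1 x A) xA.
Qed.

Lemma Bell_npartitions (n : nat) : Bell n = npartitions [set: 'I_n].
Proof. by []. Qed.

Lemma Bell0 : Bell 0 = 1.
Proof.
rewrite Bell_npartitions (_ : [set: 'I_0] = set0) ?npartitions_set0 //.
by apply/setP => -[].
Qed.

Lemma npartitions_Bell (T : finType) (A : {set T}) :
  npartitions A = Bell #|A|.
Proof.
move: {2}#|A| (leqnn #|A|) => n; elim: n T A => [|n IH] T A.
  by rewrite leqn0 cards_eq0 => /eqP ->; rewrite npartitions_set0 cards0 Bell0.
move=> leAn; have [->|[x xA]] := set_0Vmem A.
  by rewrite npartitions_set0 cards0 Bell0.
have Bell_below (U : finType) (B : {set U}) (y : U) : y \in B -> #|B| <= n.+1 ->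
    forall R : {set U}, R \subset B :\ y -> npartitions R = Bell #|R|.
  move=> yB leBn R sR; apply: IH; rewrite -ltnS (leq_trans _ leBn) //.
  by rewrite (leq_ltn_trans (subset_leq_card sR)) // (cardsD1 y B) yB.
rewrite (npartitions_Bell_sum xA (Bell_below _ _ _ xA leAn)).
have [m cardA] : exists m, #|A| = m.+1 by exists #|A|.-1; rewrite (cardsD1 x A) xA.
rewrite cardA Bell_npartitions (@npartitions_Bell_sum _ _ ord0) ?inE //.
  by rewrite cardsT card_ord.
by apply: (Bell_below _ _ _ (in_setT ord0)); rewrite cardsT card_ord -cardA.
Qed.

Lemma Bell_rec (n : nat) : Bell n.+1 = \sum_(k < n.+1) 'C(n, k) * Bell k.
Proof.
rewrite Bell_npartitions (@npartitions_Bell_sum _ _ ord0) ?inE //.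
  by rewrite cardsT card_ord.
by move=> R _; apply: npartitions_Bell.
Qed.

Lemma factorial_fact (n : nat) : n`! = fact n.
Proof. by elim: n => //= n IHn; rewrite factS IHn. Qed.

Lemma INR_sum_ord (F : nat -> nat) (n : nat) :
  INR (\sum_(k < n.+1) F k) = sum_f_R0 (fun k => INR (F k)) n.
Proof.
elim: n => [|n IHn]; first by rewrite big_ord_recr big_ord0.
by rewrite big_ord_recr /= plus_INR IHn.
Qed.

Lemma INR_binomial (n k : nat) : k <= n -> INR 'C(n, k) = Binomial.C n k.
Proof.
move=> le_kn; have := bin_fact le_kn; rewrite !factorial_fact => /(f_equal INR).
rewrite !mult_INR /Binomial.C minusE => <-.
by field; split; apply: INR_fact_neq_0.
Qed.

Lemma Bell_rec_R (n : nat) :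
  INR (Bell n.+1) = sum_f_R0 (fun k => Binomial.C n k * INR (Bell k))%R n.
Proof.
rewrite Bell_rec (INR_sum_ord (fun k => 'C(n, k) * Bell k)).
apply: PartSum.sum_eq => k le_kn.
by rewrite mult_INR INR_binomial //; apply/leP.
Qed.

End BellRecurrence.

From Stdlib Require Import Lia Lra.
From Coquelicot Require Import Coquelicot.

Lemma is_series_sum_f_R0 (a : nat -> nat -> R) (l : nat -> R) (N : nat) :
  (forall k, (k <= N)%nat -> is_series (a k) (l k)) ->
  is_series (fun m => sum_f_R0 (fun k => a k m) N) (sum_f_R0 l N).
Proof.
  induction N as [|N IHN]; intros Hconv; simpl.
  - apply Hconv; lia.
  - apply (is_series_plus (fun m => sum_f_R0 (fun k => a k m) N) (a (S N))).
    + apply IHN; intros k Hk; apply Hconv; lia.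
    + apply Hconv; lia.
Qed.

Lemma is_series_succ_iff (a : nat -> R) (l : R) :
  a O = 0 -> is_series (fun m => a (S m)) l <-> is_series a l.
Proof.
  intros Ha0; split; intros Hser.
  - apply is_series_decr_1; rewrite Ha0.
    change (is_series (fun m => a (S m)) (l + - 0)).
    rewrite Ropp_0, Rplus_0_r; exact Hser.
  - apply is_series_incr_1; rewrite Ha0.
    change (is_series a (l + 0)); rewrite Rplus_0_r; exact Hser.
Qed.

Lemma is_series_exp (x : R) : is_series (fun m => x ^ m / INR (fact m)) (exp x).
Proof.
  apply (is_series_ext (fun m => scal (pow_n x m) (/ INR (fact m)))).
  - intros m; rewrite pow_n_pow; reflexivity.
  - apply is_exp_Reals.
Qed.

Definition dobinski_term (n j : nat) : R := INR j ^ n / INR (fact j).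

(* (m+1)^(n+1)/(m+1)! = (m+1)^n/m!, expanded by the binomial theorem. *)
Lemma dobinski_term_succ (n m : nat) :
  dobinski_term (S n) (S m) =
  sum_f_R0 (fun k => Binomial.C n k * dobinski_term k m) n.
Proof.
  unfold dobinski_term.
  replace (INR (S m) ^ S n / INR (fact (S m))) with ((INR m + 1) ^ n / INR (fact m)).
  2:{ rewrite fact_simpl, mult_INR, S_INR; simpl pow.
      field; split; [apply INR_fact_neq_0 | pose proof (pos_INR m); lra]. }
  rewrite binomial; unfold Rdiv; rewrite Rmult_comm, scal_sum.
  apply sum_eq; intros k _; rewrite pow1; ring.
Qed.

Theorem dobinski (n : nat) : is_series (dobinski_term n) (INR (Bell n) * exp 1).
Proof.
  induction n as [n IH] using (well_founded_induction lt_wf).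
  destruct n as [|n].
  - rewrite BellRecurrence.Bell0; simpl INR; rewrite Rmult_1_l.
    apply (is_series_ext (fun j => 1 ^ j / INR (fact j))); [|apply is_series_exp].
    intros j; unfold dobinski_term; rewrite pow1; reflexivity.
  - apply is_series_succ_iff; [unfold dobinski_term; simpl; field|].
    rewrite BellRecurrence.Bell_rec_R, Rmult_comm, scal_sum.
    apply (is_series_ext (fun m => sum_f_R0 (fun k => Binomial.C n k * dobinski_term k m) n)).
    + intros m; symmetry; apply dobinski_term_succ.
    + apply is_series_sum_f_R0; intros k Hk.
      rewrite Rmult_assoc.
      exact (is_series_scal (Binomial.C n k) _ _ (IH k ltac:(lia))).
Qed.

(* k! S(n,k) = sum_i (-1)^i C(k,i) (k-i)^n, the number of surjections from an
   n-set onto a k-set; it carries the recurrence of the Stirling numbers. *)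
Definition surjections (n k : nat) : R :=
  sum_f_R0 (fun i => (-1) ^ i * Binomial.C k i * INR (k - i) ^ n) k.

Lemma stirling2_surjections (n k : nat) :
  stirling2 n k = / INR (fact k) * surjections n k.
Proof. reflexivity. Qed.

Lemma binomial_succ_mul (k i : nat) :
  Binomial.C (S k) (S i) * INR (S i) = INR (S k) * Binomial.C k i.
Proof.
  unfold Binomial.C; rewrite !fact_simpl, !mult_INR; simpl (S k - S i)%nat.
  field; repeat split; try apply INR_fact_neq_0; apply not_0_INR; lia.
Qed.

(* Writing (k+1-i)^(n+1) = (k+1) (k+1-i)^n - i (k+1-i)^n and absorbing the
   factor i into the binomial coefficient by binomial_succ_mul. *)
Lemma surjections_succ (n k : nat) :
  surjections (S n) (S k) = INR (S k) * (surjections n (S k) + surjections n k).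
Proof.
  unfold surjections.
  rewrite (sum_eq _ (fun i => (-1) ^ i * Binomial.C (S k) i * INR (S k - i) ^ n
                              * INR (S k)
                     - (-1) ^ i * (Binomial.C (S k) i * INR i) * INR (S k - i) ^ n)).
  2:{ intros i Hi; rewrite <- tech_pow_Rmult, minus_INR by exact Hi; ring. }
  rewrite minus_sum, <- scal_sum.
  rewrite (decomp_sum (fun i => (-1) ^ i * (Binomial.C (S k) i * INR i)
                                * INR (S k - i) ^ n)) by lia.
  simpl pred.
  rewrite (sum_eq (fun i => (-1) ^ S i * (Binomial.C (S k) (S i) * INR (S i))
                            * INR (S k - S i) ^ n)
             (fun i => (-1) ^ i * Binomial.C k i * INR (k - i) ^ n * - INR (S k))).
  2:{ intros i _; rewrite binomial_succ_mul; simpl (S k - S i)%nat; simpl pow; ring. }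
  rewrite <- scal_sum; simpl (INR 0); ring.
Qed.

Lemma stirling2_succ (n k : nat) :
  stirling2 (S n) (S k) = INR (S k) * stirling2 n (S k) + stirling2 n k.
Proof.
  rewrite !stirling2_surjections, surjections_succ, fact_simpl, mult_INR.
  field; split; [apply INR_fact_neq_0 | apply not_0_INR; lia].
Qed.

Lemma stirling2_0_0 : stirling2 0 0 = 1.
Proof. unfold stirling2, Binomial.C; simpl; field. Qed.

Lemma stirling2_succ_0 (n : nat) : stirling2 (S n) 0 = 0.
Proof. unfold stirling2, Binomial.C; simpl; field. Qed.

(* S(0,k+1) = (1/(k+1)!) (1 - 1)^(k+1) = 0. *)
Lemma stirling2_0_succ (k : nat) : stirling2 0 (S k) = 0.
Proof.
  rewrite stirling2_surjections; unfold surjections.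
  rewrite (sum_eq _ (fun i => Binomial.C (S k) i * (-1) ^ i * 1 ^ (S k - i))).
  2:{ intros i _; rewrite pow1; simpl pow; ring. }
  rewrite <- binomial; replace (-1 + 1) with 0 by ring.
  rewrite pow_i by lia; ring.
Qed.

Lemma stirling2_gt (n k : nat) : (n < k)%nat -> stirling2 n k = 0.
Proof.
  revert k; induction n as [|n IHn]; intros [|k] Hk; try lia.
  - apply stirling2_0_succ.
  - rewrite stirling2_succ, !IHn by lia; ring.
Qed.

Fixpoint falling (x : R) (k : nat) : R :=
  match k with
  | O => 1
  | S k' => falling x k' * (x - INR k')
  end.

Lemma sum_f_R0_shift (g : nat -> R) (n : nat) :
  sum_f_R0 (fun k => g (S k)) n = sum_f_R0 g (S n) - g O.
Proof. rewrite (decomp_sum g (S n)) by lia; simpl pred; ring. Qed.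

(* x^n = sum_k S(n,k) x(x-1)...(x-k+1): multiply by x = (x - k) + k and
   regroup with the triangular recurrence. *)
Lemma pow_falling (n : nat) (x : R) :
  x ^ n = sum_f_R0 (fun k => stirling2 n k * falling x k) n.
Proof.
  induction n as [|n IHn].
  - simpl; rewrite stirling2_0_0; ring.
  - rewrite (decomp_sum _ (S n)) by lia; simpl pred; rewrite stirling2_succ_0.
    rewrite (sum_eq _ (fun k => INR (S k) * stirling2 n (S k) * falling x (S k)
                                + stirling2 n k * falling x (S k))).
    2:{ intros k _; rewrite stirling2_succ; ring. }
    rewrite sum_plus, (sum_f_R0_shift (fun k => INR k * stirling2 n k * falling x k)).
    rewrite tech5, (stirling2_gt n (S n)) by lia.
    rewrite <- tech_pow_Rmult, IHn, scal_sum.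
    rewrite (sum_eq (fun k => stirling2 n k * falling x k * x)
               (fun k => INR k * stirling2 n k * falling x k + stirling2 n k * falling x (S k))).
    2:{ intros k _; simpl falling; ring. }
    rewrite sum_plus; simpl INR; ring.
Qed.

Lemma falling_opp (x : R) (k : nat) : falling (- x) k = (-1) ^ k * pochhammer x k.
Proof. induction k as [|k IHk]; simpl; [ring | rewrite IHk; ring]. Qed.

Lemma pow_minus_one_sub (n k : nat) : (k <= n)%nat -> (-1) ^ (n + k) = (-1) ^ (n - k).
Proof.
  intros Hk; replace (n + k)%nat with (n - k + k + k)%nat by lia.
  rewrite !pow_add, Rmult_assoc, <- Rpow_mult_distr.
  replace (-1 * -1) with 1 by ring; rewrite pow1; ring.
Qed.

(* The rising-factorial expansion x^n = sum_k (-1)^(n-k) S(n,k) (x)_k,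
   obtained from pow_falling at -x. *)
Lemma pow_pochhammer (n : nat) (x : R) :
  x ^ n = sum_f_R0 (fun k => (-1) ^ (n - k) * stirling2 n k * pochhammer x k) n.
Proof.
  replace (x ^ n) with ((-1) ^ n * (- x) ^ n).
  2:{ rewrite <- Rpow_mult_distr; f_equal; ring. }
  rewrite (pow_falling n (- x)), scal_sum; apply sum_eq; intros k Hk.
  rewrite falling_opp, <- pow_minus_one_sub, pow_add by exact Hk; ring.
Qed.

Definition kummer_term (k : nat) : nat -> R := hyp1F1_term (INR k + 1) 2 1.

Lemma pochhammer_fact (k m : nat) :
  pochhammer (INR k + 1) m * INR (fact k) = INR (fact (k + m)).
Proof.
  induction m as [|m IHm]; simpl pochhammer.
  - rewrite Nat.add_0_r; ring.
  - replace (k + S m)%nat with (S (k + m)) by lia.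
    rewrite fact_simpl, mult_INR, <- IHm, S_INR, plus_INR; ring.
Qed.

Lemma pochhammer_2 (m : nat) : pochhammer 2 m = INR (fact (S m)).
Proof.
  change (S m) with (1 + m)%nat; rewrite <- (pochhammer_fact 1 m); simpl INR.
  replace (1 + 1) with 2 by ring; simpl; ring.
Qed.

(* k! times the m-th Kummer term is (m+1)_k / (m+1)!, since both equal
   (k+m)! / (m! (m+1)!). *)
Lemma kummer_term_fact (k m : nat) :
  INR (fact k) * kummer_term k m = pochhammer (INR m + 1) k / INR (fact (S m)).
Proof.
  unfold kummer_term, hyp1F1_term; rewrite pochhammer_2, pow1.
  assert (Hm : INR (fact m) <> 0) by apply INR_fact_neq_0.
  assert (HSm : INR (fact (S m)) <> 0) by apply INR_fact_neq_0.
  apply (Rmult_eq_reg_r (INR (fact m))); [|exact Hm].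
  replace (pochhammer (INR m + 1) k / INR (fact (S m)) * INR (fact m))
    with (pochhammer (INR m + 1) k * INR (fact m) / INR (fact (S m))) by (field; auto).
  rewrite pochhammer_fact, Nat.add_comm, <- (pochhammer_fact k m); field; auto.
Qed.

Lemma pochhammer_nonneg (a : R) (m : nat) : 0 <= a -> 0 <= pochhammer a m.
Proof.
  intros Ha; induction m as [|m IHm]; simpl; [lra|].
  apply Rmult_le_pos; [exact IHm | pose proof (pos_INR m); lra].
Qed.

Lemma pochhammer_le (a b c : R) (m : nat) :
  0 <= a -> (forall i : nat, a + INR i <= c * (b + INR i)) ->
  pochhammer a m <= c ^ m * pochhammer b m.
Proof.
  intros Ha Hab; induction m as [|m IHm]; simpl; [lra|].
  replace (c * c ^ m * (pochhammer b m * (b + INR m)))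
    with (c ^ m * pochhammer b m * (c * (b + INR m))) by ring.
  apply Rmult_le_compat; [apply pochhammer_nonneg, Ha | pose proof (pos_INR m); lra
                         | exact IHm | apply Hab].
Qed.

(* Since (k+1)_m <= (k+1)^m (2)_m, the Kummer terms are dominated by the
   exponential series at k+1. *)
Lemma kummer_term_bound (k m : nat) :
  0 <= kummer_term k m <= (INR k + 1) ^ m / INR (fact m).
Proof.
  unfold kummer_term, hyp1F1_term; rewrite pow1, Rmult_1_r.
  pose proof (pos_INR k) as Hk.
  assert (H2 : 0 < pochhammer 2 m) by (rewrite pochhammer_2; apply INR_fact_lt_0).
  assert (Hf : 0 < / INR (fact m)) by apply Rinv_0_lt_compat, INR_fact_lt_0.
  assert (Hp : 0 <= pochhammer (INR k + 1) m) by (apply pochhammer_nonneg; lra).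
  assert (Hle : pochhammer (INR k + 1) m <= (INR k + 1) ^ m * pochhammer 2 m).
  { apply pochhammer_le; [lra|]; intros i; pose proof (pos_INR i); nra. }
  unfold Rdiv; split.
  - apply Rmult_le_pos; [apply Rmult_le_pos|]; try lra.
    left; apply Rinv_0_lt_compat, H2.
  - apply Rmult_le_compat_r; [lra|].
    apply Rle_div_l; [exact H2 | exact Hle].
Qed.

Lemma kummer_summable (k : nat) : ex_series (kummer_term k).
Proof.
  apply (@ex_series_le R_AbsRing R_CompleteNormedModule _
           (fun m => (INR k + 1) ^ m / INR (fact m))).
  - intros m; destruct (kummer_term_bound k m) as [H0 H1].
    change (norm (kummer_term k m)) with (Rabs (kummer_term k m)).
    rewrite Rabs_pos_eq; assumption.
  - exists (exp (INR k + 1)); apply is_series_exp.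
Qed.

(* The termwise identity behind the theorem: for n >= 1, the (m+1)-st
   Dobinski term expands, via pow_pochhammer at x = m+1, over the Kummer
   terms; the k = 0 summand vanishes since S(n,0) = 0. *)
Lemma dobinski_term_kummer (n m : nat) : (1 <= n)%nat ->
  dobinski_term n (S m) =
  sum_f_R0 (fun j => (-1) ^ (n - S j) * stirling2 n (S j) * INR (fact (S j))
                     * kummer_term (S j) m) (n - 1).
Proof.
  intros Hn; destruct n as [|n]; [lia|].
  replace (S n - 1)%nat with n by lia.
  unfold dobinski_term; rewrite S_INR, pow_pochhammer.
  rewrite (decomp_sum _ (S n)) by lia; simpl pred; rewrite stirling2_succ_0.
  unfold Rdiv; rewrite Rmult_0_r, Rmult_0_l, Rplus_0_l, Rmult_comm, scal_sum.
  apply sum_eq; intros j _.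
  rewrite !Rmult_assoc, kummer_term_fact; unfold Rdiv; ring.
Qed.

Theorem theorem1p1 :
  forall n : nat, (1 <= n)%nat ->
  exists F : nat -> R,
    (forall k : nat, infinite_sum (hyp1F1_term (INR k + 1) 2 1) (F k)) /\
    INR (Bell n) =
      / exp 1 *
      sum_f_R0 (fun j => let k := S j in
                  (-1) ^ (n - k) * stirling2 n k * INR (fact k) * F k)
               (n - 1).
Proof.
  intros n Hn.
  exists (fun k => Series (kummer_term k)); split.
  { intros k; apply is_series_Reals, Series_correct, kummer_summable. }
  set (c j := (-1) ^ (n - S j) * stirling2 n (S j) * INR (fact (S j))).
  set (u m := sum_f_R0 (fun j => c j * kummer_term (S j) m) (n - 1)).
  assert (Hsum : is_series u (sum_f_R0 (fun j => c j * Series (kummer_term (S j))) (n - 1))).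
  { apply is_series_sum_f_R0; intros j _.
    exact (is_series_scal (c j) _ _ (Series_correct _ (kummer_summable (S j)))). }
  assert (Hdob : is_series u (INR (Bell n) * exp 1)).
  { apply (is_series_ext (fun m => dobinski_term n (S m))).
    - intros m; apply dobinski_term_kummer, Hn.
    - apply is_series_succ_iff; [|apply dobinski].
      unfold dobinski_term; destruct n; [lia|]; simpl; field. }
  change (INR (Bell n) = / exp 1 * sum_f_R0 (fun j => c j * Series (kummer_term (S j))) (n - 1)).
  rewrite <- (is_series_unique _ _ Hsum), (is_series_unique _ _ Hdob).
  field; apply Rgt_not_eq, exp_pos.
Qed.
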